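(* Let $V$ be a real vector space, let $F$ be a geometric mean closed vector lattice, let $T\colon V\times V\to F$ be a vector semi-inner product, and let $u\in F^+$. Define $\|x\|^T_u:=T(x,x)\boxtimes u$ for $x\in V$. Then for all $x,y\in V$, \[ \|x+y\|^T_u\boxplus\|x-y\|^T_u=2^{1/2}\bigl(\|x\|^T_u\boxplus\|y\|^T_u\bigr). \]
   Context: All vector spaces are over $\mathbb{R}$ and all vector lattices are Archimedean; $F^+=\{x\in F:x\ge0\}$. A vector lattice $F$ is geometric mean closed if $\inf\{\theta u+\theta^{-1}v:\theta\in(0,\infty)\}$ exists in $F$ for all $u,v\in F^+$, and then $u\boxtimes v:=2^{-1}\inf\{\theta u+\theta^{-1}v:\theta\in(0,\infty)\}$. For $u,v\in F$, $u\boxplus v:=\sup\{(\cos\theta)u+(\sin\theta)v:\theta\in[0,2\pi]\}$; this supremum exists in every geometric mean closed vector lattice. A map $T\colon V\times V\to F$ is a vector semi-inner product if it is bilinear, symmetric ($T(x,y)=T(y,x)$), and satisfies $T(x,x)\ge 0$ for all $x\in V$. *)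

From HB Require Import structures.
From mathcomp Require Import all_boot all_order all_algebra.
From mathcomp Require Import all_classical all_reals all_analysis.
Set Implicit Arguments. Unset Strict Implicit. Unset Printing Implicit Defensive.
Import Order.TTheory GRing.Theory Num.Theory.
Local Open Scope classical_set_scope.
Local Open Scope ring_scope.

Section VectorLattice.
Variables (R : realType) (F : lmodType R) (le : F -> F -> Prop).

Definition is_lub (S : set F) (s : F) : Prop :=
  (forall x, S x -> le x s) /\ (forall b, (forall x, S x -> le x b) -> le s b).

Definition is_glb (S : set F) (s : F) : Prop :=
  (forall x, S x -> le s x) /\ (forall b, (forall x, S x -> le b x) -> le b s).

Record vector_lattice : Prop := {
  vl_refl : forall x, le x x;
  vl_antisym : forall x y, le x y -> le y x -> x = y;
  vl_trans : forall x y z, le x y -> le y z -> le x z;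
  vl_add : forall x y z, le x y -> le (x + z) (y + z);
  vl_scale : forall (a : R) x y, 0 <= a -> le x y -> le (a *: x) (a *: y);
  vl_sup : forall x y, exists s, is_lub [set x; y] s;
  vl_archimedean : forall x y, le 0 x ->
     (forall n : nat, le (n%:R *: x) y) -> x = 0 }.

Definition gm_set (u v : F) : set F :=
  [set t | exists theta : R, 0 < theta /\ t = theta *: u + theta^-1 *: v].

Definition geometric_mean_closed : Prop :=
  forall u v, le 0 u -> le 0 v -> exists z, is_glb (gm_set u v) z.

Definition boxtimes (u v : F) : F := 2^-1 *: xget 0 (is_glb (gm_set u v)).

Definition bp_set (u v : F) : set F :=
  [set t | exists theta : R, 0 <= theta <= 2 * pi /\
           t = cos theta *: u + sin theta *: v].

Definition boxplus (u v : F) : F := xget 0 (is_lub (bp_set u v)).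

End VectorLattice.

Definition vector_semi_inner_product (R : realType) (V F : lmodType R)
  (le : F -> F -> Prop) (T : V -> V -> F) : Prop :=
  (forall (a : R) x y z, T (a *: x + y) z = a *: T x z + T y z) /\
  (forall (a : R) x y z, T x (a *: y + z) = a *: T x y + T x z) /\
  (forall x y, T x y = T y x) /\
  (forall x, le 0 (T x x)).

Definition Tnorm (R : realType) (V F : lmodType R) (le : F -> F -> Prop)
  (T : V -> V -> F) (u : F) (x : V) : F := boxtimes le (T x x) u.

(* Write [gm_inf c] for [inf {t c + t^-1 u : t > 0}], so that [c ⊠ u = gm_inf c / 2] and
   [gm_inf (k^2 c) = k gm_inf c].  By the parallelogram law
   [T(x+y,x+y) + T(x-y,x-y) = 2 (T(x,x) + T(y,y))] the theorem reduces to
   [gm_inf a ⊞ gm_inf b = gm_inf (a + b)] for [a, b >= 0].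
   Completing the square gives [cos θ gm_inf a + sin θ gm_inf b <= gm_inf (a + b)].
   Conversely, let [W] bound all these combinations.  As joins distribute over infima,
   [W] dominates, for the angles of a grid of mesh [1/N], a join of elements
   [cos θ_j (s_j a + u / s_j) + sin θ_j (t_j b + u / t_j)].  At two neighbouring angles on
   either side of the diagonal [s cos θ = t sin θ] these mix convexly into [A (a + b) + C u]
   with [C A >= 1 - 1/N], so [(1 - 1/N) gm_inf (a + b) <= W] for every [N], and the
   Archimedean property concludes. *)

From HB Require Import structures.
From mathcomp Require Import all_boot all_order all_algebra.
From mathcomp Require Import all_classical all_reals all_analysis.
From mathcomp Require Import ring lra.
Import Order.TTheory GRing.Theory Num.Theory.
Set Implicit Arguments. Unset Strict Implicit. Unset Printing Implicit Defensive.
Local Open Scope classical_set_scope.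
Local Open Scope ring_scope.

Lemma discrete_ivt (P : nat -> Prop) N :
  P 0%N -> ~ P N -> exists2 j, (j < N)%N & P j /\ ~ P j.+1.
Proof.
elim: N => [|N IH] P0 PN; first by [].
case: (pselect (P N)) => [PN'|nPN]; first by exists N.
by have [j jN Pj] := IH P0 nPN; exists j => //; apply: ltnW.
Qed.

Section RealInequalities.
Variable R : realFieldType.
Implicit Types l m c s x y K : R.

Lemma sqrD_le_mul_divD x y s t : 0 <= x -> 0 <= y -> 0 < s -> 0 < t ->
  (x + y) ^+ 2 <= (x / s + y / t) * (x * s + y * t).
Proof.
move=> hx hy hs ht.
have -> : (x / s + y / t) * (x * s + y * t) =
    (x + y) ^+ 2 + x * y * ((s - t) ^+ 2 / (s * t)).
  by field; rewrite !gt_eqF.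
rewrite lerDl; apply: mulr_ge0; first exact: mulr_ge0.
by apply: divr_ge0; rewrite ?sqr_ge0 ?mulr_ge0 ?ltW.
Qed.

Lemma le_sqr_convex l m c1 c2 K : 0 <= l -> 0 <= m -> l + m = 1 ->
  0 <= c1 -> 0 <= c2 -> K <= c1 ^+ 2 -> K <= c2 ^+ 2 -> K <= (l * c1 + m * c2) ^+ 2.
Proof.
move=> hl hm hlm hc1 hc2 hK1 hK2.
have [c12|c21] := leP c1 c2.
  have : c1 <= l * c1 + m * c2 by nra.
  nra.
have : c2 <= l * c1 + m * c2 by nra.
nra.
Qed.

Lemma convex_pos l m x y : 0 <= l -> 0 <= m -> l + m = 1 -> 0 < x -> 0 < y ->
  0 < l * x + m * y.
Proof.
move=> hl hm hlm hx hy.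
by have [xy|yx] := leP x y; [have : x <= l * x + m * y by nra|have : y <= l * x + m * y by nra];
  lra.
Qed.

Lemma circle_pos c s x y : 0 <= c -> 0 <= s -> c ^+ 2 + s ^+ 2 = 1 -> 0 < x -> 0 < y ->
  0 < c * x + s * y.
Proof.
move=> hc hs h1 hx hy; have [c_lt0|c_gt0|c0] := ltgtP c 0; first by lra.
  by have := mulr_gt0 c_gt0 hx; have := mulr_ge0 hs (ltW hy); lra.
have s_gt0 : 0 < s by move: h1; rewrite c0; nra.
by rewrite c0 mul0r add0r mulr_gt0.
Qed.

Lemma le_mix_mul l m c1 c2 s1 s2 K : 0 <= l -> 0 <= m -> l + m = 1 ->
  0 <= c1 -> 0 <= c2 -> 0 < s1 -> 0 < s2 -> K <= c1 ^+ 2 -> K <= c2 ^+ 2 ->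
  K <= (l * c1 / s1 + m * c2 / s2) * (l * c1 * s1 + m * c2 * s2).
Proof.
move=> hl hm hlm hc1 hc2 hs1 hs2 hK1 hK2.
apply: le_trans (le_sqr_convex hl hm hlm hc1 hc2 hK1 hK2) _.
by apply: sqrD_le_mul_divD; rewrite ?mulr_ge0.
Qed.

Lemma balance_weights (D1 D2 : R) : 0 <= D1 -> D2 < 0 ->
  exists l m, [/\ 0 <= l, 0 <= m, l + m = 1 & l * D1 + m * D2 = 0].
Proof.
move=> hD1 hD2; have hD : 0 < D1 - D2 by lra.
exists (- D2 / (D1 - D2)), (D1 / (D1 - D2)); split.
- by rewrite divr_ge0 // ?oppr_ge0 ltW.
- by rewrite divr_ge0 // ltW.
- by field; rewrite gt_eqF.
- by field; rewrite gt_eqF.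
Qed.

Lemma natr_ratio_itv (j N : nat) : (0 < N)%N -> (j <= N)%N ->
  0 <= (j%:R / N%:R : R) <= 1.
Proof. by move=> N0 jN; rewrite divr_ge0 ?ler0n //= ler_pdivrMr ?ltr0n // mul1r ler_nat. Qed.

End RealInequalities.

Lemma cos_sin_sqrt (R : realType) (p : R) : 0 <= p <= 1 ->
  exists2 th, 0 <= th <= 2 * pi & cos th = Num.sqrt (1 - p) /\ sin th = Num.sqrt p.
Proof.
move=> /andP[p0 p1]; have hc : -1 <= Num.sqrt (1 - p) <= 1.
  rewrite (le_trans _ (sqrtr_ge0 _)) ?lerN10 //= -[X in _ <= X]sqrtr1.
  by rewrite ler_sqrt // lerBlDr lerDl.
exists (acos (Num.sqrt (1 - p))).
  by rewrite acos_ge0 //= (le_trans (acos_lepi hc)) // ler_peMl ?pi_ge0 ?ler1n.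
rewrite acosK ?in_itv // sin_acos // sqr_sqrtr ?subr_ge0 //.
by split => //; rewrite opprB addrCA subrr addr0.
Qed.

Section VectorLattice.
Variables (R : realType) (F : lmodType R) (le : F -> F -> Prop).
Hypothesis hF : vector_lattice le.

Lemma lev_refl x : le x x. Proof. exact: vl_refl hF x. Qed.
Lemma lev_trans x y z : le x y -> le y z -> le x z.
Proof. by move=> hxy hyz; apply: vl_trans hF _ _ _ hxy hyz. Qed.
Lemma lev_anti x y : le x y -> le y x -> x = y.
Proof. by move=> hxy hyx; apply: vl_antisym hF _ _ hxy hyx. Qed.

Lemma subv_ge0 x y : le 0 (y - x) <-> le x y.
Proof.
split=> h; first by have := vl_add hF x h; rewrite add0r subrK.
by have := vl_add hF (- x) h; rewrite subrr.
Qed.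

Lemma levD x y z w : le x y -> le z w -> le (x + z) (y + w).
Proof.
move=> hxy hzw; apply: lev_trans (vl_add hF z hxy) _.
by rewrite addrC [y + w]addrC; apply: vl_add.
Qed.

Lemma addv_ge0 x y : le 0 x -> le 0 y -> le 0 (x + y).
Proof. by move=> hx hy; have := levD hx hy; rewrite addr0. Qed.

Lemma levZ k x y : 0 <= k -> le x y -> le (k *: x) (k *: y).
Proof. by move=> hk hxy; apply: (vl_scale hF); rewrite ?hk. Qed.

Lemma scalev_ge0 k x : 0 <= k -> le 0 x -> le 0 (k *: x).
Proof. by move=> hk /(levZ hk); rewrite scaler0. Qed.

Lemma levZl k1 k2 x : k1 <= k2 -> le 0 x -> le (k1 *: x) (k2 *: x).
Proof.
by move=> hk hx; apply/subv_ge0; rewrite -scalerBl; apply: scalev_ge0; rewrite ?subr_ge0.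
Qed.

Lemma levBlDr x y z : le (x - z) y <-> le x (y + z).
Proof.
by split=> /subv_ge0 h; apply/subv_ge0; move: h; rewrite opprB addrA.
Qed.

Lemma levBrDr x y z : le x (y - z) <-> le (x + z) y.
Proof.
by split=> /subv_ge0 h; apply/subv_ge0; move: h; rewrite opprD addrA addrAC.
Qed.

Lemma is_lub_unique S x y : is_lub le S x -> is_lub le S y -> x = y.
Proof. by move=> [ubx lubx] [uby luby]; apply: lev_anti; [apply: lubx|apply: luby]. Qed.

Lemma boxplusE x y z : is_lub le (bp_set x y) z -> boxplus le x y = z.
Proof. by move=> hz; apply: (is_lub_unique _ hz); apply: xgetPex; exists z. Qed.

Definition join x y : F := xget 0 (is_lub le [set x; y]).

Lemma joinP x y : is_lub le [set x; y] (join x y).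
Proof. by apply: xgetPex; apply: (vl_sup hF). Qed.

Lemma lev_joinl x y : le x (join x y).
Proof. by apply: (joinP x y).1; left. Qed.

Lemma lev_joinr x y : le y (join x y).
Proof. by apply: (joinP x y).1; right. Qed.

Lemma join_lev x y z : le x z -> le y z -> le (join x y) z.
Proof. by move=> hx hy; apply: (joinP x y).2 => w [->|->]. Qed.

Definition meet x y : F := x + y - join x y.

Lemma subv_meetl x y : x - meet x y = join x y - y.
Proof. by rewrite opprB opprD addrCA addNKr. Qed.

Lemma meet_levl x y : le (meet x y) x.
Proof. by apply/subv_ge0; rewrite subv_meetl; apply/subv_ge0/lev_joinr. Qed.

Lemma subv_meetr x y : y - meet x y = join x y - x.
Proof. by rewrite opprB opprD addrCA; congr (_ + _); rewrite addrCA subrr addr0. Qed.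

Lemma meet_levr x y : le (meet x y) y.
Proof. by apply/subv_ge0; rewrite subv_meetr; apply/subv_ge0/lev_joinl. Qed.

Lemma lev_meet x y z : le z x -> le z y -> le z (meet x y).
Proof.
move=> hx hy; apply/levBrDr; rewrite addrC; apply/levBrDr.
apply: join_lev; apply/levBrDr; first exact: levD (lev_refl x) hy.
by rewrite [x + y]addrC; apply: levD (lev_refl y) hx.
Qed.

(* Infinite distributivity [x ∨ inf S = inf (x ∨ S)], via [join x s + meet x s = x + s]. *)
Lemma lev_join_glb S X x z : is_glb le S X ->
  (forall s, S s -> le z (join x s)) -> le z (join x X).
Proof.
move=> [lbX glbX] hz.
have hX : le (z + meet x X - x) X.
  apply: glbX => s Ss.
  have -> : s = join x s + meet x s - x.
    by rewrite /meet addrCA (subrr (join x s)) addr0 addrAC subrr add0r.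
  apply: levD (lev_refl _); apply: levD (hz s Ss) _.
  by apply: lev_meet; [apply: meet_levl | apply: lev_trans (meet_levr x X) (lbX s Ss)].
have -> : join x X = X + x - meet x X.
  by rewrite /meet (addrC X) opprB addrCA subrr addr0.
by apply/levBrDr; apply/levBlDr.
Qed.

Lemma lev_glb_scale S X (c : R) w : is_glb le S X -> 0 <= c -> (exists s, S s) ->
  (forall s, S s -> le w (c *: s)) -> le w (c *: X).
Proof.
move=> [lbX glbX] hc [s0 Ss0] hw.
case: (eqVneq c 0) => [c0|c0]; first by move: (hw _ Ss0); rewrite c0 !scale0r.
have -> : w = c *: (c^-1 *: w) by rewrite scalerA divff // scale1r.
apply: (levZ hc); apply: glbX => s Ss.
have -> : s = c^-1 *: (c *: s) by rewrite scalerA mulVf // scale1r.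
by apply: levZ _ (hw s Ss); rewrite invr_ge0.
Qed.

Lemma is_glb_comb S T X Y (c d : R) : is_glb le S X -> is_glb le T Y ->
  0 <= c -> 0 <= d -> (exists s, S s) -> (exists t, T t) ->
  is_glb le [set w | exists s t, S s /\ T t /\ w = c *: s + d *: t] (c *: X + d *: Y).
Proof.
move=> hX hY hc hd hS hT; split.
  by move=> w [s [t [Ss [Tt ->]]]]; apply: levD; apply: levZ => //; [apply: hX.1|apply: hY.1].
move=> z hz.
have hzY t : T t -> le (z - c *: X) (d *: t).
  move=> Tt; apply/levBlDr; rewrite addrC; apply/levBlDr.
  by apply: lev_glb_scale hX hc hS _ => s Ss; apply/levBlDr; apply: hz; exists s, t.
by rewrite addrC; apply/levBlDr; apply: lev_glb_scale hY hd hT hzY.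
Qed.

(* An upper bound of finitely many infima bounds the infimum of the joins of their
   elements, since that join of infima equals this infimum. *)
Lemma lev_join_glb_family (S : nat -> set F) (H : nat -> F) k W z :
  (forall j, is_glb le (S j) (H j)) -> (forall j, (j < k)%N -> le (H j) W) ->
  (forall y, (forall j, (j < k)%N -> exists2 x, S j x & le x y) -> le z y) ->
  le z W.
Proof.
move=> hS; suff gen : forall e, (forall j, (j < k)%N -> le (H j) W) ->
    (forall y, (forall j, (j < k)%N -> exists2 x, S j x & le x y) -> le e y -> le z y) ->
    le e W -> le z W.
  by move=> hW hz; apply: (gen W hW _ (lev_refl W)) => y hy _; apply: hz.
elim: k => [|k IH] e hW hz heW; first by apply: hz => // j.
apply: (IH (join e (H k))).
- by move=> j hj; apply: hW; rewrite ltnS ltnW.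
- move=> y hy hey.
  have he := lev_trans (lev_joinl e (H k)) hey.
  have hH := lev_trans (lev_joinr e (H k)) hey.
  apply: lev_trans (join_lev (lev_refl y) hH).
  apply: (lev_join_glb (hS k)) => s Ss.
  apply: hz; last exact: lev_trans he (lev_joinl _ _).
  move=> i; rewrite ltnS leq_eqVlt => /predU1P [->|hi].
    by exists s => //; apply: lev_joinr.
  by have [x Sx hx] := hy i hi; exists x => //; apply: lev_trans hx (lev_joinl _ _).
- exact: join_lev heW (hW _ (ltnSn k)).
Qed.

Lemma lev_of_almost g W : le 0 g ->
  (forall N, (0 < N)%N -> le ((1 - N%:R^-1) *: g) W) -> le g W.
Proof.
move=> hg hW; pose x := join (g - W) 0.
have hx n : le (n%:R *: x) g.
  case: n => [|n]; first by rewrite scale0r.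
  have hn : (0 : R) < n.+1%:R by rewrite ltr0n.
  suff : le x (n.+1%:R^-1 *: g).
    by move/(levZ (ltW hn)); rewrite scalerA divff ?scale1r // gt_eqF.
  apply: join_lev; last by apply: scalev_ge0; rewrite ?invr_ge0 ?ler0n.
  apply/levBlDr; move: (hW _ (ltn0Sn n)); rewrite scalerBl scale1r.
  by move/levBlDr; rewrite addrC.
have x0 : x = 0 := vl_archimedean hF (lev_joinr _ _) hx.
by rewrite -[W]add0r; apply/levBlDr; rewrite -x0; apply: lev_joinl.
Qed.

Section GeometricMean.
Hypothesis hgm : geometric_mean_closed le.
Variable u : F.
Hypothesis hu : le 0 u.

Definition gm_inf (c : F) : F := xget 0 (is_glb le (gm_set c u)).

Lemma boxtimesE c : boxtimes le c u = 2^-1 *: gm_inf c.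
Proof. by []. Qed.

Lemma gm_infP c : le 0 c -> is_glb le (gm_set c u) (gm_inf c).
Proof. by move=> hc; apply: xgetPex; apply: hgm. Qed.

Lemma gm_set_nonempty c : exists s, gm_set c u s.
Proof. by exists (1 *: c + 1^-1 *: u), 1. Qed.

Lemma gm_inf_le c t : le 0 c -> 0 < t -> le (gm_inf c) (t *: c + t^-1 *: u).
Proof. by move=> hc ht; apply: (gm_infP hc).1; exists t. Qed.

Lemma lev_gm_inf c z : le 0 c ->
  (forall t, 0 < t -> le z (t *: c + t^-1 *: u)) -> le z (gm_inf c).
Proof. by move=> hc hz; apply: (gm_infP hc).2 => _ [t [ht ->]]; apply: hz. Qed.

Lemma gm_inf_ge0 c : le 0 c -> le 0 (gm_inf c).
Proof.
move=> hc; apply: lev_gm_inf => // t ht.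
by apply: addv_ge0; apply: scalev_ge0; rewrite // ?invr_ge0 ltW.
Qed.

Lemma gm_infZ_ge c k : le 0 c -> 0 < k -> le (k *: gm_inf c) (gm_inf (k ^+ 2 *: c)).
Proof.
move=> hc hk; apply: lev_gm_inf; first by apply: scalev_ge0; rewrite ?exprn_ge0 ?ltW.
move=> t ht.
have -> : t *: (k ^+ 2 *: c) + t^-1 *: u = k *: ((t * k) *: c + (t * k)^-1 *: u).
  by rewrite scalerDr !scalerA; congr (_ *: _ + _ *: _); field; rewrite ?gt_eqF.
by apply: levZ (ltW hk) _; apply: gm_inf_le => //; apply: mulr_gt0.
Qed.

Lemma gm_infZ c k : le 0 c -> 0 < k -> gm_inf (k ^+ 2 *: c) = k *: gm_inf c.
Proof.
move=> hc hk; apply: lev_anti => //; last exact: gm_infZ_ge.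
have hkc : le 0 (k ^+ 2 *: c) by apply: scalev_ge0; rewrite ?exprn_ge0 ?ltW.
have hk' : 0 < k^-1 by rewrite invr_gt0.
have := levZ (ltW hk) (gm_infZ_ge hkc hk').
by rewrite !scalerA mulfV ?gt_eqF // scale1r -exprMn mulVf ?gt_eqF // expr1n scale1r.
Qed.

Lemma gm_inf_scale_le c k r : le 0 c -> 0 < r ->
  le (k *: gm_inf c) (r *: c + (k ^+ 2 / r) *: u).
Proof.
move=> hc hr; apply: lev_trans (levZl (ler_norm k) (gm_inf_ge0 hc)) _.
rewrite -(real_normK (num_real k)).
have [k0|k_gt0] := eqVneq `|k| 0.
  rewrite k0 scale0r expr0n mul0r scale0r addr0.
  by apply: scalev_ge0 (ltW hr) hc.
have hk : 0 < `|k| by rewrite lt_def k_gt0 normr_ge0.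
have := levZ (ltW hk) (gm_inf_le hc (divr_gt0 hr hk)).
rewrite scalerDr !scalerA invf_div; congr (le _ (_ *: _ + _ *: _)).
  by field; rewrite gt_eqF.
by rewrite expr2 mulrA.
Qed.

Lemma gm_inf_le_diag c (kappa A C : R) : le 0 c -> 0 <= kappa <= 1 -> 0 < A ->
  kappa <= C * A -> le (kappa *: gm_inf c) (A *: c + C *: u).
Proof.
move=> hc /andP[k0 k1] hA hkC; apply: lev_trans (gm_inf_scale_le kappa hc hA) _.
apply: levD (lev_refl _) (levZl _ hu).
by rewrite ler_pdivrMr //; nra.
Qed.

Lemma gm_inf_comb_le a b (c d : R) : le 0 a -> le 0 b -> c ^+ 2 + d ^+ 2 <= 1 ->
  le (c *: gm_inf a + d *: gm_inf b) (gm_inf (a + b)).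
Proof.
move=> ha hb hcd; apply: lev_gm_inf (addv_ge0 ha hb) _ => r hr.
apply: lev_trans (levD (gm_inf_scale_le c ha hr) (gm_inf_scale_le d hb hr)) _.
rewrite addrACA -scalerDr -scalerDl -mulrDl.
apply: levD (lev_refl _) (levZl _ hu).
by rewrite ler_pdivrMr // mulVf ?gt_eqF.
Qed.

Section Quarter.
Variables a b : F.
Hypotheses (ha : le 0 a) (hb : le 0 b).

Definition quarter_elem (p s t : R) : F :=
  Num.sqrt (1 - p) *: (s *: a + s^-1 *: u) + Num.sqrt p *: (t *: b + t^-1 *: u).

Definition quarter_set (p : R) : set F :=
  [set w | exists s t, gm_set a u s /\ gm_set b u t /\
           w = Num.sqrt (1 - p) *: s + Num.sqrt p *: t].

Lemma quarter_setP p :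
  is_glb le (quarter_set p) (Num.sqrt (1 - p) *: gm_inf a + Num.sqrt p *: gm_inf b).
Proof.
by apply: is_glb_comb; rewrite ?sqrtr_ge0 //;
  [apply: gm_infP | apply: gm_infP | apply: gm_set_nonempty | apply: gm_set_nonempty].
Qed.

Definition lincomb (x y z : R) : F := x *: a + y *: b + z *: u.

Lemma lincombD x y z x' y' z' :
  lincomb x y z + lincomb x' y' z' = lincomb (x + x') (y + y') (z + z').
Proof. by rewrite /lincomb !scalerDl addrACA (addrACA (x *: a)). Qed.

Lemma lincombZ k x y z : k *: lincomb x y z = lincomb (k * x) (k * y) (k * z).
Proof. by rewrite /lincomb !scalerDr !scalerA. Qed.

Lemma quarter_elemE p s t : quarter_elem p s t =
  lincomb (Num.sqrt (1 - p) * s) (Num.sqrt p * t) (Num.sqrt (1 - p) / s + Num.sqrt p / t).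
Proof. by rewrite /quarter_elem /lincomb !scalerDr !scalerA scalerDl addrACA. Qed.

(* The convex combination balancing the [a]- and [b]-coefficients of the two elements has
   the form [A *: (a + b) + C *: u], and Cauchy-Schwarz gives [C * A >= 1 - (p2 - p1)]. *)
Lemma gm_inf_le_straddle p1 p2 s1 t1 s2 t2 y :
  0 <= p1 <= p2 -> p2 <= 1 -> 0 < s1 -> 0 < t1 -> 0 < s2 -> 0 < t2 ->
  Num.sqrt p1 * t1 <= Num.sqrt (1 - p1) * s1 -> Num.sqrt (1 - p2) * s2 < Num.sqrt p2 * t2 ->
  le (quarter_elem p1 s1 t1) y -> le (quarter_elem p2 s2 t2) y ->
  le ((1 - (p2 - p1)) *: gm_inf (a + b)) y.
Proof.
move=> /andP[hp1 hp12] hp2 hs1 ht1 hs2 ht2 hD1 hD2 hX1 hX2.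
set c1 := Num.sqrt (1 - p1) in hD1 hX1; set q1 := Num.sqrt p1 in hD1 hX1.
set c2 := Num.sqrt (1 - p2) in hD2 hX2; set q2 := Num.sqrt p2 in hD2 hX2.
have hc1 : c1 ^+ 2 = 1 - p1 by rewrite sqr_sqrtr // subr_ge0 (le_trans hp12).
have hq1 : q1 ^+ 2 = p1 by rewrite sqr_sqrtr.
have hc2 : c2 ^+ 2 = 1 - p2 by rewrite sqr_sqrtr // subr_ge0.
have hq2 : q2 ^+ 2 = p2 by rewrite sqr_sqrtr // (le_trans hp1).
have [l [m [hl hm hlm hlmD]]] := @balance_weights _ (c1 * s1 - q1 * t1) (c2 * s2 - q2 * t2)
  ltac:(by rewrite subr_ge0) ltac:(by rewrite subr_lt0).
pose A := l * c1 * s1 + m * c2 * s2.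
have hAb : l * q1 * t1 + m * q2 * t2 = A by rewrite -[A]subr0 -hlmD /A; ring.
have hA : 0 < A.
  have hcq1 : c1 ^+ 2 + q1 ^+ 2 = 1 by rewrite hc1 hq1 subrK.
  have hcq2 : c2 ^+ 2 + q2 ^+ 2 = 1 by rewrite hc2 hq2 subrK.
  have := convex_pos hl hm hlm (circle_pos (sqrtr_ge0 _) (sqrtr_ge0 _) hcq1 hs1 ht1)
    (circle_pos (sqrtr_ge0 _) (sqrtr_ge0 _) hcq2 hs2 ht2).
  have -> : l * (c1 * s1 + q1 * t1) + m * (c2 * s2 + q2 * t2) = A + A by rewrite -{2}hAb /A; ring.
  lra.
have hKa : 1 - p2 <= (l * c1 / s1 + m * c2 / s2) * A.
  by apply: le_mix_mul; rewrite ?sqrtr_ge0 ?hc1 ?hc2 ?lerD2l ?lerN2.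
have hKb : p1 <= (l * q1 / t1 + m * q2 / t2) * A.
  by rewrite -hAb; apply: le_mix_mul; rewrite ?sqrtr_ge0 ?hq1 ?hq2.
have hmix : le (l *: quarter_elem p1 s1 t1 + m *: quarter_elem p2 s2 t2) y.
  by rewrite -[y]scale1r -hlm scalerDl; apply: levD; apply: levZ.
apply: lev_trans hmix; rewrite !quarter_elemE !lincombZ lincombD.
have -> : l * (c1 * s1) + m * (c2 * s2) = A by rewrite /A !mulrA.
have -> : l * (q1 * t1) + m * (q2 * t2) = A by rewrite -hAb !mulrA.
rewrite /lincomb -scalerDr; apply: gm_inf_le_diag (addv_ge0 ha hb) _ hA _.
  by apply/andP; split; lra.
have -> : l * (c1 / s1 + q1 / t1) + m * (c2 / s2 + q2 / t2) =
  (l * c1 / s1 + m * c2 / s2) + (l * q1 / t1 + m * q2 / t2) by ring.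
by rewrite mulrDl; lra.
Qed.

Lemma gm_inf_le_of_grid N y : (0 < N)%N ->
  (forall j, (j <= N)%N -> exists2 x, quarter_set (j%:R / N%:R) x & le x y) ->
  le ((1 - N%:R^-1) *: gm_inf (a + b)) y.
Proof.
move=> N0 hy; pose p j : R := j%:R / N%:R.
have hp j : (j <= N)%N -> 0 <= p j <= 1 := natr_ratio_itv R N0.
have hX j : (j <= N)%N -> exists s t, [/\ 0 < s, 0 < t & le (quarter_elem (p j) s t) y].
  by move=> /hy [_ [_ [_ [[s [hs ->]] [[t [ht ->]] ->]]]] hxy]; exists s, t.
pose P j := exists s t, [/\ 0 < s, 0 < t,
  Num.sqrt (p j) * t <= Num.sqrt (1 - p j) * s & le (quarter_elem (p j) s t) y].
have P0 : P 0%N.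
  have [s [t [hs ht hxy]]] := hX 0%N (leq0n N); exists s, t; split => //.
  by rewrite /p mul0r subr0 sqrtr0 sqrtr1 mul0r mul1r ltW.
have nPN : ~ P N.
  move=> [s [t [hs ht + _]]]; rewrite /p divff ?pnatr_eq0 -?lt0n // subrr sqrtr0 sqrtr1.
  by rewrite mul0r mul1r leNgt ht.
have [j jN [[s1 [t1 [hs1 ht1 hD1 hX1]]] nPj1]] := discrete_ivt P0 nPN.
have [s2 [t2 [hs2 ht2 hX2]]] := hX j.+1 jN.
have hD2 : Num.sqrt (1 - p j.+1) * s2 < Num.sqrt (p j.+1) * t2.
  by rewrite ltNge; apply/negP => hD2; apply: nPj1; exists s2, t2.
have -> : 1 - N%:R^-1 = 1 - (p j.+1 - p j).
  by rewrite /p -mulrBl -natrB // subSnn mulr1n div1r.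
apply: gm_inf_le_straddle hs1 ht1 hs2 ht2 hD1 hD2 hX1 hX2; last by case/andP: (hp _ jN).
have /andP[pj_ge0 _] := hp j (ltnW jN).
by rewrite pj_ge0 ler_wpM2r ?invr_ge0 ?ler0n ?ler_nat.
Qed.

Lemma gm_inf_le_of_quarter W :
  (forall p, 0 <= p <= 1 -> le (Num.sqrt (1 - p) *: gm_inf a + Num.sqrt p *: gm_inf b) W) ->
  le (gm_inf (a + b)) W.
Proof.
move=> hW; apply: lev_of_almost (gm_inf_ge0 (addv_ge0 ha hb)) _ => N N0.
apply: (lev_join_glb_family (k := N.+1) (fun j => quarter_setP (j%:R / N%:R))).
  by move=> j; rewrite ltnS => hj; apply/hW/natr_ratio_itv.
by move=> y hy; apply: gm_inf_le_of_grid N0 _ => j hj; apply: hy; rewrite ltnS.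
Qed.

Lemma boxplus_gm_inf :
  boxplus le (2^-1 *: gm_inf a) (2^-1 *: gm_inf b) = 2^-1 *: gm_inf (a + b).
Proof.
have h2 : 0 <= 2^-1 :> R by rewrite invr_ge0.
apply: boxplusE; split.
  move=> _ [th [_ ->]]; rewrite !scalerA !(mulrC _ 2^-1) -!scalerA -scalerDr.
  by apply: levZ h2 _; apply: gm_inf_comb_le; rewrite // cos2Dsin2.
move=> w hw; rewrite -[w](scalerK (_ : 2 != 0 :> R)) //.
apply: levZ h2 _; apply: gm_inf_le_of_quarter => p hp.
have [th hth [hcos hsin]] := cos_sin_sqrt hp.
set v := cos th *: (2^-1 *: gm_inf a) + sin th *: (2^-1 *: gm_inf b).
have : bp_set (2^-1 *: gm_inf a) (2^-1 *: gm_inf b) v by exists th.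
move/hw; rewrite /v hcos hsin !scalerA !(mulrC _ 2^-1) -!scalerA -scalerDr.
by move/(levZ (ler0n R 2)); rewrite scalerA divff ?scale1r.
Qed.

End Quarter.

End GeometricMean.

End VectorLattice.

Lemma bilinear_parallelogram (R : pzRingType) (V W : lmodType R) (T : V -> V -> W) :
  (forall a x y z, T (a *: x + y) z = a *: T x z + T y z) ->
  (forall a x y z, T x (a *: y + z) = a *: T x y + T x z) ->
  forall x y, T (x + y) (x + y) + T (x - y) (x - y) = (T x x + T y y) *+ 2.
Proof.
move=> hl hr x y.
have TDl v w z : T (v + w) z = T v z + T w z by rewrite -[v]scale1r hl !scale1r.
have TDr v w z : T z (v + w) = T z v + T z w by rewrite -[v]scale1r hr !scale1r.
have TBl v w z : T (v - w) z = T v z - T w z by rewrite addrC -scaleN1r hl scaleN1r addrC.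
have TBr v w z : T z (v - w) = T z v - T z w by rewrite addrC -scaleN1r hr scaleN1r addrC.
rewrite TDl TBl !TBr !TDr.
set A := T x x; set B := T x y; set C := T y x; set D := T y y.
rewrite opprB addrACA (addrACA A) (subrr B) addr0 (addrC D) (addrACA C) (subrr C) add0r.
by rewrite mulr2n addrACA.
Qed.

Theorem theorem3p8 (R : realType) (V F : lmodType R) (le : F -> F -> Prop)
  (hF : vector_lattice le) (hgm : geometric_mean_closed le)
  (T : V -> V -> F) (hT : vector_semi_inner_product le T)
  (u : F) (hu : le 0 u) (x y : V) :
  boxplus le (Tnorm le T u (x + y)) (Tnorm le T u (x - y)) =
  Num.sqrt 2 *: boxplus le (Tnorm le T u x) (Tnorm le T u y).
Proof.
have [hl [hr [_ hT0]]] := hT.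
have hTxy : le 0 (T x x + T y y) := addv_ge0 hF (hT0 x) (hT0 y).
have hsqrt2 : 0 < Num.sqrt 2 :> R by rewrite sqrtr_gt0 ltr0n.
rewrite /Tnorm !boxtimesE !(boxplus_gm_inf hF hgm hu) //.
have -> : T (x + y) (x + y) + T (x - y) (x - y) = Num.sqrt 2 ^+ 2 *: (T x x + T y y).
  by rewrite bilinear_parallelogram // sqr_sqrtr ?ler0n // scaler_nat.
by rewrite (gm_infZ hF hgm hu hTxy hsqrt2) !scalerA mulrC.
Qed.
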